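(* Let $\mathcal B$ be a binomial class of reluctant functions and suppose there is a delta operator $\mathfrak d$ on $\mathbb Q[x]$ whose basic sequence $(p_n(x))_{n\ge0}$ satisfies $|F(S,X)|=p_n(|X|)$ whenever $|S|=n$ (for all finite disjoint $S,X$). Let $x$ be a positive integer, $n\ge0$, and $\mathcal Z=(z_i)_{i\ge0}$ a sequence of integers with $1\le z_0\le z_1\le\cdots\le z_{n-1}\le x$ (the remaining terms arbitrary). Then $$ord(z_0,\dots,z_{n-1})=t_n\big(x;\mathfrak d,(x-z_i)_{i\ge0}\big)=t_n\big(0;\mathfrak d,(-z_i)_{i\ge0}\big),$$ i.e. $t_n(0;\mathfrak d,-\mathcal Z)$ counts the reluctant functions in $\mathcal B$ from an $n$-element set to $\{1,\dots,x\}$ whose order statistics are bounded by $\mathcal Z$.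
   Context: For finite disjoint sets $S,X$, a reluctant function from $S$ to $X$ is a map $f:S\to S\cup X$ such that for every $s\in S$ some iterate $f^k(s)$, $k\ge1$, lies in $X$; this element is the final image of $s$. A binomial class $\mathcal B$ assigns to each pair $(S,X)$ of finite disjoint sets a set $F(S,X)$ of reluctant functions from $S$ to $X$, compatible with bijections of $S$ and $X$, such that for disjoint $X,Y$ the map $f\mapsto(f_A,f_{S\setminus A})$ ($A$ = elements whose final image is in $X$; restrictions) is a bijection from $F(S,X\cup Y)$ onto $\bigsqcup_{A\subseteq S}F(A,X)\times F(S\setminus A,Y)$. For $S=\{s_0,\dots,s_{n-1}\}$, $X=\{1,\dots,x\}$, $f\in F(S,X)$, let $x_i$ be the final image of $s_i$ and $x_{(0)}\le\cdots\le x_{(n-1)}$ its nondecreasing rearrangement; $ord(z_0,\dots,z_{n-1})$ is the number of $f\in F(S,X)$ with $x_{(j)}\le z_j$ for all $j$. A delta operator is a linear operator $\mathfrak d$ on $\mathbb Q[x]$ commuting with all shifts $f(x)\mapsto f(x+a)$ and with $\mathfrak d(x)$ a nonzero constant; its basic sequence is the unique $(p_n)$ with $\deg p_n=n$, $p_0=1$, $p_n(0)=0$ ($n\ge1$), $\mathfrak dp_n=np_{n-1}$. $t_n(x;\mathfrak d,\mathcal W)$ denotes the $n$-th term of the generalized Gončarov basis associated with $(\mathfrak d,\mathcal W)$ for a sequence $\mathcal W=(w_i)_{i\ge0}$: the unique sequence $(t_n)_{n\ge0}$ with $\deg t_n=n$ and $\mathfrak d^{\,i}(t_n)$ evaluated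 at $w_i$ equal to $n!\,\delta_{i,n}$ for all $i,n$. *)

From HB Require Import structures.
From mathcomp Require Import all_boot all_order all_algebra.
Set Implicit Arguments. Unset Strict Implicit. Unset Printing Implicit Defensive.
Import Order.TTheory GRing.Theory Num.Theory.

Section Reluctant.
Variables (S X : finType).

Definition rstep (f : {ffun S -> S + X}) (u : S + X) : S + X :=
  match u with inl s => f s | inr x => inr x end.

Definition is_inr (u : S + X) : bool := if u is inr _ then true else false.

Definition reluctant (f : {ffun S -> S + X}) : Prop :=
  forall s : S, exists k : nat, (0 < k)%N /\ is_inr (iter k (rstep f) (inl s)).

(* final image of s (the element of X reached; the path reaches X within
   #|S| steps when f is reluctant, and stays there).  None if not reached. *)
Definition final (f : {ffun S -> S + X}) (s : S) : option X :=
  match iter #|S| (rstep f) (inl s) with inr x => Some x | inl _ => None end.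

End Reluctant.

Definition transport (S S' X X' : finType) (sigma : S -> S') (sigma' : S' -> S)
  (tau : X -> X') (f : {ffun S -> S + X}) : {ffun S' -> S' + X'} :=
  [ffun s' => match f (sigma' s') with
              | inl s => inl (sigma s) | inr x => inr (tau x) end].

(* used for the restrictions occurring in a binomial class.)           *)
Definition restr (S X Y Z : finType) (A : {set S}) (pr : X + Y -> option Z)
  (f : {ffun S -> S + (X + Y)}) : {ffun {s : S | s \in A} -> {s : S | s \in A} + Z} :=
  [ffun a => match f (val a) with
             | inl s' => match insub s' with Some a' => inl a' | None => inl a end
             | inr w => match pr w with Some z => inr z | None => inl a end
             end].

Definition prL (X Y : finType) (w : X + Y) : option X :=
  match w with inl x => Some x | inr _ => None end.
Definition prR (X Y : finType) (w : X + Y) : option Y :=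
  match w with inl _ => None | inr y => Some y end.

Definition finalX (S X Y : finType) (f : {ffun S -> S + (X + Y)}) : {set S} :=
  [set s | if final f s is Some (inl _) then true else false].

Record binomial_class := BinomialClass {
  bc_F : forall S X : finType, {set {ffun S -> S + X}};
  bc_reluctant : forall (S X : finType) f, f \in bc_F S X -> reluctant f;
  bc_bij : forall (S S' X X' : finType) (sigma : S -> S') (sigma' : S' -> S)
      (tau : X -> X') (tau' : X' -> X),
      cancel sigma sigma' -> cancel sigma' sigma ->
      cancel tau tau' -> cancel tau' tau ->
      forall f, (transport sigma sigma' tau f \in bc_F S' X') = (f \in bc_F S X);
  (* the map f |-> (f_A, f_{S\A}) is well defined ... *)
  bc_decomp_into : forall (S X Y : finType) f, f \in bc_F S (X + Y)%type ->
      restr (finalX f) (@prL X Y) f \in bc_F _ X /\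
      restr (~: finalX f) (@prR X Y) f \in bc_F _ Y;
  (* ... injective ... *)
  bc_decomp_inj : forall (S X Y : finType) (A : {set S}) f g,
      f \in bc_F S (X + Y)%type -> g \in bc_F S (X + Y)%type ->
      finalX f = A -> finalX g = A ->
      restr A (@prL X Y) f = restr A (@prL X Y) g ->
      restr (~: A) (@prR X Y) f = restr (~: A) (@prR X Y) g -> f = g;
  (* ... and onto the disjoint union over A ⊆ S of F(A,X) × F(S\A,Y) *)
  bc_decomp_onto : forall (S X Y : finType) (A : {set S}) g h,
      g \in bc_F {s : S | s \in A} X -> h \in bc_F {s : S | s \in ~: A} Y ->
      exists2 f, f \in bc_F S (X + Y)%type &
        [/\ finalX f = A, restr A (@prL X Y) f = g & restr (~: A) (@prR X Y) f = h]
}.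

Local Open Scope ring_scope.

Definition delta_operator (d : {poly rat} -> {poly rat}) : Prop :=
  [/\ (forall (a : rat) (p q : {poly rat}), d (a *: p + q) = a *: d p + d q),
      (forall (a : rat) (p : {poly rat}),
          d (p \Po ('X + a%:P)) = (d p) \Po ('X + a%:P)) &
      (exists2 c : rat, c != 0 & d 'X = c%:P)].

Definition basic_sequence (d : {poly rat} -> {poly rat}) (p : nat -> {poly rat}) : Prop :=
  [/\ (forall n, size (p n) = n.+1),
      p 0%N = 1,
      (forall n, (p n.+1).[0] = 0) &
      (forall n, d (p n.+1) = n.+1%:R *: p n)].

Definition goncarov_basis (d : {poly rat} -> {poly rat}) (W : nat -> rat)
    (t : nat -> {poly rat}) : Prop :=
  forall n, size (t n) = n.+1 /\
    forall i, (iter i d (t n)).[W i] = (n`! * (i == n))%:R.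

(* ord(z_0,...,z_{n-1}) : S = {s_0..s_{n-1}} = 'I_n, X = {1..x} where  *)
(* j : 'I_x represents the integer j+1.                                *)
Definition final_value (n x : nat) (f : {ffun 'I_n -> 'I_n + 'I_x}) (i : 'I_n) : nat :=
  if final f i is Some j then (val j).+1 else 0%N.

Definition order_stats (n x : nat) (f : {ffun 'I_n -> 'I_n + 'I_x}) : seq nat :=
  sort leq [seq final_value f i | i <- enum 'I_n].

Definition ord_count (B : binomial_class) (n x : nat) (z : nat -> int) : nat :=
  #|[set f in bc_F B 'I_n 'I_x |
      [forall j : 'I_n, ((nth 0%N (order_stats f) j)%:Z <= z j)%R]]|.

From HB Require Import structures.
From mathcomp Require Import all_boot all_order all_algebra.
Import Order.TTheory GRing.Theory Num.Theory.
Set Implicit Arguments. Unset Strict Implicit. Unset Printing Implicit Defensive.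

(* Sort the functions of [F(S, {1..y})], [|S| = N], by the first index [i]
   with [x_(i) > z_i].  For such a function exactly [i] elements have final
   image in [{1..z_i}]; splitting [{1..y} = {1..z_i} ⊔ {z_i+1..y}] with the
   binomial property shows that there are
   [C(N,i) ord_i(z_0..z_(i-1); z_i) p_(N-i)(y - z_i)] of them, so
     p_N(y) = ord_N(z; y) + sum_(i<N) C(N,i) ord_i(z; z_i) p_(N-i)(y - z_i).
   Expanding [p_N(. + c)] in the Gončarov basis [t] (its interpolation data
   are [d^i p_N (w_i + c) = N^_i p_(N-i)(w_i + c)]) shows that the values
   [t_i(a)] satisfy the same recurrence, whose term [i = N] has coefficient
   [p_0 = 1]; by strong induction on [N] the two sequences coincide. *)

Lemma count_enum_card (T : finType) (P : pred T) :
  count P (enum T) = #|[set s | P s]|.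
Proof.
rewrite cardE /enum_mem size_filter -enumT filter_predT.
by apply: eq_count => x; rewrite !inE.
Qed.

Lemma nth_sorted_le_count (c : int) (u : seq nat) j :
  sorted leq u -> j < size u ->
  ((nth 0 u j)%:Z <= c)%R = (j < count (fun a : nat => (a%:Z <= c)%R) u).
Proof.
elim: u j => [|a u IH] j //= sorted_au lt_j.
have sorted_u : sorted leq u by apply: path_sorted sorted_au.
have a_min : all (leq a) u by apply: order_path_min sorted_au; exact: leq_trans.
case le_ac: (a%:Z <= c)%R; first by case: j lt_j => [|j] //= lt_j; rewrite IH.
have gt_c b : b \in u -> (b%:Z <= c)%R = false.
  move=> bu; apply/negbTE/negP => le_bc; move/allP: a_min => /(_ b bu) le_ab.
  by move: le_ac; rewrite (le_trans _ le_bc) // lez_nat.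
rewrite (eq_in_count gt_c) count_pred0 ltn0.
by case: j lt_j => [|j] //= lt_j; rewrite gt_c // mem_nth.
Qed.

Lemma card_sig_set (S : finType) (A : {set S}) : #|{: {s | s \in A}}| = #|A|.
Proof. by rewrite card_sig; apply: eq_card => s; rewrite inE. Qed.

Lemma card_in_fibers (T J : finType) (D : {set T}) (P : pred T) (h : T -> J) :
  #|[set x in D | P x]| = \sum_(a : J) #|[set x in D | (h x == a) && P x]|.
Proof.
rewrite -sum1_card (partition_big h xpredT) //=; apply: eq_bigr => a _.
by rewrite -sum1_card; apply: eq_bigl => x; rewrite !inE -andbA (andbC (P x)).
Qed.

Lemma card_first_failure (T : finType) (D : {set T}) (Q : nat -> pred T) n :
  #|D| = #|[set x in D | [forall j : 'I_n, Q j x]]| +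
         \sum_(i < n) #|[set x in D | ~~ Q i x && [forall j : 'I_i, Q j x]]|.
Proof.
elim: n => [|n IH].
  rewrite big_ord0 addn0; apply: eq_card => x; rewrite inE.
  by case: (x \in D) => //=; symmetry; apply/forallP => -[].
have forall_recr x : [forall j : 'I_n.+1, Q j x] = [forall j : 'I_n, Q j x] && Q n x.
  apply/forallP/andP => [Qx|[/forallP Qx Qnx] j].
    by split; [apply/forallP => j; exact: (Qx (widen_ord (leqnSn n) j)) | exact: (Qx ord_max)].
  case: (ltnP j n) => [lt_jn|le_nj]; first exact: (Qx (Ordinal lt_jn)).
  suff -> : (j : nat) = n by [].
  by apply/eqP; rewrite eqn_leq le_nj -ltnS ltn_ord.
rewrite {1}IH big_ord_recr /= [RHS]addnCA [LHS]addnC; congr (_ + _).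
rewrite -(cardID [pred x | Q n x] [set x in D | [forall j : 'I_n, Q j x]]).
congr (_ + _); apply: eq_card => x; rewrite !inE ?forall_recr.
  by rewrite andbA.
by rewrite andbCA.
Qed.

Section ReluctantIteration.
Variables (S X : finType) (f : {ffun S -> S + X}).

Lemma iter_rstep_inr k x : iter k (rstep f) (inr x) = inr x.
Proof. by elim: k => //= k ->. Qed.

Lemma iter_rstep_is_inr k l s : k <= l ->
  is_inr (iter k (rstep f) (inl s)) -> is_inr (iter l (rstep f) (inl s)).
Proof.
move=> /subnK <-; rewrite iterD.
by case: (iter k (rstep f) (inl s)) => // x _; rewrite iter_rstep_inr.
Qed.

Hypothesis f_rel : reluctant f.

(* The first iterates before reaching X are pairwise distinct (a repetition
   would shift the first hit of X earlier), so X is reached within #|S| steps. *)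
Lemma is_inr_iter_card s : is_inr (iter #|S| (rstep f) (inl s)).
Proof.
pose u k := iter k (rstep f) (inl s).
have [k [_ uk]] := f_rel s.
have [m um m_min] := ex_minnP (ex_intro (fun k => is_inr (u k)) k uk).
have u_inl i : i < m -> exists t, u i = inl t.
  move=> lt_im; case ui: (u i) => [t|x]; first by exists t.
  by have := m_min i; rewrite ui leqNgt lt_im => /(_ isT).
pose h (i : 'I_m) := if u i is inl t then t else s.
have h_inj : injective h.
  move=> i j; wlog lt_ij : i j / i < j.
    move=> W hij; case: (ltngtP i j) => [/W/(_ hij)|/W/(_ (esym hij))|/val_inj] //.
  move=> hij; have [[ti uti] [tj utj]] := (u_inl i (ltn_ord i), u_inl j (ltn_ord j)).
  have uij : u i = u j by rewrite uti utj; move: hij; rewrite /h uti utj => ->.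
  have ltm : (m - j) + i < m.
    by rewrite -(ltn_add2r j) addnAC subnK ?ltn_add2l // ltnW.
  suff : is_inr (u ((m - j) + i)) by move/m_min; rewrite leqNgt ltm.
  by rewrite /u iterD -/(u i) uij /u -iterD subnK // ltnW.
apply: (iter_rstep_is_inr (k := m)) => //.
by rewrite -(card_ord m) (leq_card h h_inj).
Qed.

Lemma iter_rstep_ge_card k s : #|S| <= k ->
  iter k (rstep f) (inl s) = iter #|S| (rstep f) (inl s).
Proof.
move=> /subnK <-; rewrite iterD; have := is_inr_iter_card s.
by case: (iter #|S| (rstep f) (inl s)) => // x _; rewrite iter_rstep_inr.
Qed.

Lemma final_neq_None s : final f s != None.
Proof. by rewrite /final; have := is_inr_iter_card s; case: (iter _ _ _). Qed.

Lemma final_rstep_inl s s' : f s = inl s' -> final f s' = final f s.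
Proof.
move=> fs; rewrite /final -(iter_rstep_ge_card s (leqnSn _)) iterSr /=.
by rewrite fs.
Qed.

Lemma final_rstep_inr s x : f s = inr x -> final f s = Some x.
Proof.
move=> fs; rewrite /final; have : 0 < #|S| by apply/card_gt0P; exists s.
by case: #|S| => // k _; rewrite iterSr /= fs iter_rstep_inr.
Qed.

End ReluctantIteration.

(* The trajectories of [a] under [f] and under its restriction agree while they
   stay in [A]; they then land on [w] and [pr w] respectively. *)
Lemma final_restr (S X Y Z : finType) (A : {set S}) (pr : X + Y -> option Z)
  (f : {ffun S -> S + (X + Y)}) :
  reluctant f -> reluctant (restr A pr f) ->
  (forall s, (s \in A) = (if final f s is Some w then pr w != None else false)) ->
  forall a : {s | s \in A}, final (restr A pr f) a = obind pr (final f (val a)).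
Proof.
move=> f_rel g_rel memA a; have := valP a; rewrite memA.
case fa: (final f (val a)) => [w|] //; case prw: (pr w) => [z|] // _ /=.
set g := restr A pr f.
have trace k :
  (exists b : {s | s \in A}, [/\ iter k (rstep g) (inl a) = inl b,
      iter k (rstep f) (inl (val a)) = inl (val b) & final f (val b) = Some w])
  \/ (iter k (rstep g) (inl a) = inr z /\ iter k (rstep f) (inl (val a)) = inr w).
  elim: k => [|k [[b [gb fb finb]]|[gz fw]]]; first by left; exists a.
  - rewrite /= gb fb /= /g /restr ffunE.
    case fvb: (f (val b)) => [s'|w'].
    + have s'A : s' \in A by rewrite memA (final_rstep_inl f_rel fvb) finb prw.
      left; exists (Sub s' s'A); rewrite insubT /=.
      by split => //; rewrite (final_rstep_inl f_rel fvb).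
    + by have := final_rstep_inr fvb; rewrite finb => -[<-]; rewrite prw; right.
  - by right; rewrite /= gz fw.
have cardA : #|{: {s | s \in A}}| <= #|S| by apply: (leq_card val); exact: val_inj.
rewrite /final -(iter_rstep_ge_card g_rel a cardA).
case: (trace #|S|) => [[b [_ fb _]]|[-> //]].
by have := is_inr_iter_card f_rel (val a); rewrite fb.
Qed.

Lemma iter_rstep_transport (S S' X X' : finType) (sigma : S -> S') (sigma' : S' -> S)
  (tau : X -> X') (f : {ffun S -> S + X}) :
  cancel sigma sigma' ->
  forall k s, iter k (rstep (transport sigma sigma' tau f)) (inl (sigma s)) =
    match iter k (rstep f) (inl s) with inl t => inl (sigma t) | inr x => inr (tau x) end.
Proof.
move=> sigmaK; elim=> [|k IH] s //=; rewrite IH.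
case: (iter k (rstep f) (inl s)) => [t|x] //=.
by rewrite /transport ffunE sigmaK; case: (f t).
Qed.

Lemma final_transport (S S' X X' : finType) (sigma : S -> S') (sigma' : S' -> S)
  (tau : X -> X') (f : {ffun S -> S + X}) :
  cancel sigma sigma' -> cancel sigma' sigma -> reluctant f ->
  forall s, final (transport sigma sigma' tau f) (sigma s) = omap tau (final f s).
Proof.
move=> sigmaK sigma'K f_rel s.
rewrite /final -(bij_eq_card (Bijective sigmaK sigma'K)) iter_rstep_transport //.
by have := is_inr_iter_card f_rel s; case: (iter _ _ _).
Qed.

Lemma transportK (S S' X X' : finType) (sigma : S -> S') (sigma' : S' -> S)
  (tau : X -> X') (tau' : X' -> X) (f : {ffun S' -> S' + X'}) :
  cancel sigma' sigma -> cancel tau' tau ->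
  transport sigma sigma' tau (transport sigma' sigma tau' f) = f.
Proof.
move=> sigma'K tau'K; apply/ffunP => s; rewrite /transport !ffunE sigma'K.
by case: (f s) => [t|x]; rewrite ?sigma'K ?tau'K.
Qed.

Section BinomialClassCounting.
Variable B : binomial_class.

Lemma card_bc_transport (S S' X X' : finType) (sigma : S -> S') (sigma' : S' -> S)
  (tau : X -> X') (tau' : X' -> X)
  (P : pred {ffun S -> S + X}) (P' : pred {ffun S' -> S' + X'}) :
  cancel sigma sigma' -> cancel sigma' sigma ->
  cancel tau tau' -> cancel tau' tau ->
  (forall f, f \in bc_F B S X -> P' (transport sigma sigma' tau f) = P f) ->
  #|[set f in bc_F B S X | P f]| = #|[set f in bc_F B S' X' | P' f]|.
Proof.
move=> sigmaK sigma'K tauK tau'K PP'.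
have -> : [set f in bc_F B S' X' | P' f] =
   [set transport sigma sigma' tau f | f in [set f in bc_F B S X | P f]].
  apply/setP => f'; rewrite inE; apply/idP/imsetP.
  - case/andP => f'F P'f'.
    have fF : transport sigma' sigma tau' f' \in bc_F B S X.
      by rewrite (bc_bij B sigma'K sigmaK tau'K tauK).
    exists (transport sigma' sigma tau' f'); last by rewrite transportK.
    by rewrite inE fF -PP' // transportK.
  - move=> [f]; rewrite inE => /andP [fF Pf] ->.
    by rewrite (bc_bij B sigmaK sigma'K tauK tau'K) fF PP'.
rewrite card_imset //.
by apply: (can_inj (g := transport sigma' sigma tau')) => f; rewrite transportK.
Qed.

Lemma card_bc_decomp (S X Y : finType) (A : {set S})
  (P : pred {ffun {s : S | s \in A} -> {s : S | s \in A} + X})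
  (Q : pred {ffun {s : S | s \in ~: A} -> {s : S | s \in ~: A} + Y}) :
  #|[set f in bc_F B S (X + Y)%type | (finalX f == A) &&
       P (restr A (@prL X Y) f) && Q (restr (~: A) (@prR X Y) f)]| =
  (#|[set g in bc_F B _ X | P g]| * #|[set h in bc_F B _ Y | Q h]|)%N.
Proof.
rewrite -cardsX.
have -> : setX [set g in bc_F B _ X | P g] [set h in bc_F B _ Y | Q h] =
  [set (restr A (@prL X Y) f, restr (~: A) (@prR X Y) f) | f in
    [set f in bc_F B S (X + Y)%type | (finalX f == A) &&
       P (restr A (@prL X Y) f) && Q (restr (~: A) (@prR X Y) f)]].
  apply/setP => [[g h]]; rewrite !inE /=; apply/idP/imsetP.
  - case/andP => /andP [gF Pg] /andP [hF Qh].
    have [f fF [fA fg fh]] := bc_decomp_onto gF hF.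
    by exists f; rewrite ?fg ?fh // inE fF fA eqxx fg fh Pg Qh.
  - move=> [f]; rewrite inE => /andP [fF /andP [/andP [/eqP fA Pf] Qf]] [-> ->].
    by have := bc_decomp_into fF; rewrite fA => -[-> ->]; rewrite Pf Qf.
rewrite card_in_imset // => f g; rewrite !inE.
move=> /andP [fF /andP [/andP [/eqP fA _] _]] /andP [gF /andP [/andP [/eqP gA _] _]].
by case; exact: bc_decomp_inj fF gF fA gA.
Qed.

End BinomialClassCounting.

Definition final_val (S X : finType) (v : X -> nat) (f : {ffun S -> S + X}) (s : S) : nat :=
  if final f s is Some w then v w else 0.

Definition card_final_le (S X : finType) (v : X -> nat) (f : {ffun S -> S + X}) (c : int) :=
  #|[set s | ((final_val v f s)%:Z <= c)%R]|.

(* [x_(j) <= z_j] says that at least [j + 1] final values are [<= z_j]. *)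
Definition bounded_by (z : nat -> int) (n : nat) (S X : finType) (v : X -> nat)
  (f : {ffun S -> S + X}) : bool := [forall j : 'I_n, j < card_final_le v f (z j)].

Definition succ_val (y : nat) (j : 'I_y) : nat := j.+1.

Definition ord_count_on (B : binomial_class) (z : nat -> int) (S : finType) (y : nat) :=
  #|[set f in bc_F B S 'I_y | bounded_by z #|S| (@succ_val y) f]|.

Lemma ord_count_onE B n y z : ord_count B n y z = ord_count_on B z 'I_n y.
Proof.
rewrite /ord_count /ord_count_on card_ord; apply: eq_card => f; rewrite !inE.
congr andb; apply: eq_forallb => j.
rewrite nth_sorted_le_count; last first.
- by rewrite size_sort size_map size_enum_ord.
- exact: (sort_sorted leq_total).
by rewrite count_sort count_map count_enum_card.
Qed.

Lemma card_final_le_transport (S S' X X' : finType) (sigma : S -> S') (sigma' : S' -> S)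
  (tau : X -> X') (v : X -> nat) (v' : X' -> nat) (f : {ffun S -> S + X}) c :
  cancel sigma sigma' -> cancel sigma' sigma -> reluctant f ->
  (forall w, v' (tau w) = v w) ->
  card_final_le v' (transport sigma sigma' tau f) c = card_final_le v f c.
Proof.
move=> sigmaK sigma'K f_rel vtau.
have fv s : final_val v' (transport sigma sigma' tau f) (sigma s) = final_val v f s.
  by rewrite /final_val final_transport //; case: (final f s) => //= w.
rewrite /card_final_le -(card_imset _ (can_inj sigmaK)); apply: eq_card => s'.
rewrite inE; apply/idP/imsetP.
- by move=> le_c; exists (sigma' s'); [rewrite inE -fv sigma'K | rewrite sigma'K].
- by move=> [s]; rewrite inE => le_c ->; rewrite fv.
Qed.

Lemma ord_count_on_bij B z (S S' : finType) (sigma : S -> S') (sigma' : S' -> S) y :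
  cancel sigma sigma' -> cancel sigma' sigma -> ord_count_on B z S y = ord_count_on B z S' y.
Proof.
move=> sigmaK sigma'K; rewrite /ord_count_on -(bij_eq_card (Bijective sigmaK sigma'K)).
apply: (card_bc_transport (tau := id) (tau' := id)) => // f fF.
apply: eq_forallb => j.
by rewrite (card_final_le_transport (v := @succ_val y)) //; exact: bc_reluctant fF.
Qed.

Lemma ord_count_on_ord B z (S : finType) y : ord_count_on B z S y = ord_count_on B z 'I_#|S| y.
Proof. exact: ord_count_on_bij (@enum_rankK S) (@enum_valK S). Qed.

(* [X + Y] with [X = 'I_m], [Y = 'I_k] stands for [{1..m} ⊔ {m+1..m+k}]. *)
Definition sum_val (m k : nat) (w : 'I_m + 'I_k) : nat :=
  match w with inl a => (val a).+1 | inr b => (m + val b).+1 end.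

Lemma sum_val_split (m k : nat) (w : 'I_(m + k)) : sum_val (split w) = succ_val w.
Proof. by rewrite /succ_val; case: splitP => j /= ->. Qed.

Section SplitCodomain.
Variables (m k : nat) (S : finType) (f : {ffun S -> S + ('I_m + 'I_k)}).
Hypothesis f_rel : reluctant f.
Let A := finalX f.
Let g := restr A (@prL 'I_m 'I_k) f.
Hypothesis g_rel : reluctant g.

Lemma mem_finalX s :
  (s \in A) = (if final f s is Some w then @prL 'I_m 'I_k w != None else false).
Proof. by rewrite /A /finalX inE; case: (final f s) => // [[]]. Qed.

Lemma final_val_restr (a : {s | s \in A}) :
  final_val (@succ_val m) g a = final_val (@sum_val m k) f (val a).
Proof.
rewrite /final_val (final_restr f_rel g_rel mem_finalX).
by have := valP a; rewrite mem_finalX; case: (final f (val a)) => // [[x|y]].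
Qed.

Lemma final_val_le_mem s : ((final_val (@sum_val m k) f s)%:Z <= m%:Z)%R = (s \in A).
Proof.
rewrite mem_finalX /final_val; have := final_neq_None f_rel s.
case: (final f s) => // [[x|y]] _ /=; rewrite lez_nat ?ltn_ord //.
by rewrite ltnNge leq_addr.
Qed.

Lemma card_final_le_finalX : card_final_le (@sum_val m k) f m%:Z = #|A|.
Proof. by apply: eq_card => s; rewrite inE final_val_le_mem. Qed.

Lemma card_final_le_restr (c : int) : (c <= m%:Z)%R ->
  card_final_le (@sum_val m k) f c = card_final_le (@succ_val m) g c.
Proof.
move=> le_cm; rewrite /card_final_le -(card_imset _ val_inj); apply: eq_card => s.
rewrite inE; apply/idP/imsetP.
- move=> le_c; have sA : s \in A by rewrite -final_val_le_mem (le_trans le_c).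
  by exists (Sub s sA); rewrite // inE final_val_restr.
- by move=> [a]; rewrite inE final_val_restr => le_c ->.
Qed.

End SplitCodomain.

Definition fails_first_at (z : nat -> int) (i : nat) (S X : finType) (v : X -> nat)
  (f : {ffun S -> S + X}) : bool :=
  ~~ (i < card_final_le v f (z i)) && bounded_by z i v f.

Lemma fails_first_at_split (z : nat -> int) (m k i : nat) (S : finType)
  (f : {ffun S -> S + ('I_m + 'I_k)}) :
  reluctant f -> reluctant (restr (finalX f) (@prL 'I_m 'I_k) f) ->
  (forall j, j <= i -> (z j <= m%:Z)%R) -> (z i = m%:Z)%R ->
  fails_first_at z i (@sum_val m k) f =
  (#|finalX f| == i) && bounded_by z i (@succ_val m) (restr (finalX f) (@prL 'I_m 'I_k) f).
Proof.
move=> f_rel g_rel le_zm zi; rewrite /fails_first_at zi card_final_le_finalX //.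
have -> : bounded_by z i (@sum_val m k) f =
    bounded_by z i (@succ_val m) (restr (finalX f) (@prL 'I_m 'I_k) f).
  by apply: eq_forallb => j; rewrite card_final_le_restr // le_zm // ltnW.
case: i le_zm zi => [|i] _ _; first by rewrite -leqNgt leqn0.
case/boolP: (bounded_by _ _ _ _) => [bounded|]; last by rewrite !andbF.
have lt_i : i < #|finalX f|.
  move/forallP: bounded => /(_ ord_max) /= /leq_trans; apply.
  by rewrite -card_sig_set; exact: max_card.
by rewrite !andbT -leqNgt eqn_leq andbC lt_i.
Qed.

Lemma card_bc_ord B (S X : finType) : #|bc_F B S X| = #|bc_F B 'I_#|S| X|.
Proof.
have setT_card (T : finType) (D : {set T}) : #|D| = #|[set x in D | predT x]|.
  by apply: eq_card => x; rewrite !inE andbT.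
rewrite setT_card (setT_card _ (bc_F B 'I_#|S| X)).
exact: (card_bc_transport (tau := id) (tau' := id) (@enum_rankK S) (@enum_valK S)).
Qed.

Section FirstFailure.
Variables (B : binomial_class) (z : nat -> int) (S : finType) (m k i : nat).
Hypotheses (le_zm : forall j, j <= i -> (z j <= m%:Z)%R) (zi : (z i = m%:Z)%R).

Lemma card_fails_first_at_fiber (A : {set S}) :
  #|[set f in bc_F B S ('I_m + 'I_k)%type |
      (finalX f == A) && fails_first_at z i (@sum_val m k) f]| =
  if #|A| == i then ord_count_on B z 'I_i m * #|bc_F B 'I_(#|S| - i) 'I_k| else 0.
Proof.
pose P (g : {ffun {s | s \in A} -> {s | s \in A} + 'I_m}) :=
  (#|A| == i) && bounded_by z i (@succ_val m) g.
transitivity #|[set f in bc_F B S ('I_m + 'I_k)%type | (finalX f == A) &&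
    P (restr A (@prL 'I_m 'I_k) f) && predT (restr (~: A) (@prR 'I_m 'I_k) f)]|.
  apply: eq_card => f; rewrite !inE andbT.
  case/boolP: (f \in bc_F B S _) => //= fF.
  case/boolP: (finalX f == A) => //= /eqP fA.
  have f_rel := bc_reluctant fF.
  have g_rel : reluctant (restr (finalX f) (@prL 'I_m 'I_k) f).
    by case: (bc_decomp_into fF) => gF _; exact: bc_reluctant gF.
  by rewrite fails_first_at_split // fA.
rewrite card_bc_decomp; case: eqP => [cardA|/eqP ncardA]; last first.
  by rewrite [#|[set g in _ | _]|]eq_card0 // => g; rewrite !inE /P (negbTE ncardA) andbF.
congr (_ * _).
  transitivity (ord_count_on B z {s | s \in A} m).
    rewrite /ord_count_on card_sig_set cardA.
    by apply: eq_card => g; rewrite !inE /P cardA eqxx.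
  by rewrite ord_count_on_ord card_sig_set cardA.
have cardCA : #|~: A| = #|S| - i by rewrite -cardA -(cardsC A) addKn.
transitivity #|bc_F B {s | s \in ~: A} 'I_k|.
  by apply: eq_card => h; rewrite !inE andbT.
by rewrite card_bc_ord card_sig_set cardCA.
Qed.

Lemma card_fails_first_at_sum :
  #|[set f in bc_F B S ('I_m + 'I_k)%type | fails_first_at z i (@sum_val m k) f]| =
  'C(#|S|, i) * (ord_count_on B z 'I_i m * #|bc_F B 'I_(#|S| - i) 'I_k|).
Proof.
rewrite (card_in_fibers _ _ (@finalX S 'I_m 'I_k)).
under eq_bigr => A _ do rewrite card_fails_first_at_fiber.
rewrite -big_mkcond /= sum_nat_const -card_draws; congr (_ * _).
by apply: eq_card => A; rewrite inE.
Qed.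

End FirstFailure.

Lemma card_fails_first_at B z (S : finType) (m y i : nat) :
  m <= y -> (forall j, j <= i -> (z j <= m%:Z)%R) -> (z i = m%:Z)%R ->
  #|[set f in bc_F B S 'I_y | fails_first_at z i (@succ_val y) f]| =
  'C(#|S|, i) * (ord_count_on B z 'I_i m * #|bc_F B 'I_(#|S| - i) 'I_(y - m)|).
Proof.
move=> /subnKC <-; set k := y - m => le_zm zi.
rewrite addKn -(card_fails_first_at_sum B S k le_zm zi).
apply: (card_bc_transport (sigma := id) (sigma' := id) _ _
  (@splitK m k) (@unsplitK m k)) => //.
move=> f fF; have f_rel := bc_reluctant fF.
rewrite /fails_first_at (card_final_le_transport (v := @succ_val (m + k))) //; last first.
  by move=> w; rewrite sum_val_split.
congr andb; apply: eq_forallb => j.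
by rewrite (card_final_le_transport (v := @succ_val (m + k))) // => w; rewrite sum_val_split.
Qed.

Lemma card_bc_first_failure B z (S : finType) (y : nat) :
  (forall j i, j <= i -> i < #|S| -> (z j <= z i)%R) ->
  (forall i, i < #|S| -> (0 <= z i)%R) ->
  (forall i, i < #|S| -> (z i <= y%:Z)%R) ->
  #|bc_F B S 'I_y| = ord_count_on B z S y + \sum_(i < #|S|)
     'C(#|S|, i) * (ord_count_on B z 'I_i `|z i| * #|bc_F B 'I_(#|S| - i) 'I_(y - `|z i|)|).
Proof.
move=> z_mono z_ge0 le_zy.
rewrite (card_first_failure _ (fun j f => j < card_final_le (@succ_val y) f (z j)) #|S|).
congr (_ + _); apply: eq_bigr => i _.
have zi : (z i = `|z i|%:Z)%R by rewrite gez0_abs ?z_ge0.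
rewrite -card_fails_first_at //.
- by rewrite -lez_nat -zi le_zy.
- by move=> j le_ji; rewrite -zi z_mono.
Qed.

Local Open Scope ring_scope.

Lemma deg_basis_span (F : fieldType) (t : nat -> {poly F}) :
  (forall i, size (t i) = i.+1) ->
  forall N (q : {poly F}), (size q <= N)%N -> exists c : nat -> F, q = \sum_(i < N) c i *: t i.
Proof.
move=> size_t; elim=> [|N IH] q size_q.
  by exists (fun _ => 0); rewrite big_ord0; apply/eqP; rewrite -size_poly_eq0 -leqn0.
have tN_lead : (t N)`_N != 0.
  have := lead_coef_eq0 (t N); rewrite lead_coefE size_t /= => ->.
  by rewrite -size_poly_eq0 size_t.
pose a := q`_N / (t N)`_N.
have size_r : (size (q - a *: t N)%R <= N)%N.
  apply/leq_sizeP => j le_Nj; rewrite coefB coefZ.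
  case: (ltngtP j N) => [|lt_Nj|->]; first by rewrite ltnNge le_Nj.
    move/leq_sizeP: size_q => /(_ j lt_Nj) ->.
    have : (size (t N) <= N.+1)%N by rewrite size_t.
    by move/leq_sizeP => /(_ j lt_Nj) ->; rewrite mulr0 subr0.
  by rewrite /a divfK // subrr.
have [c rE] := IH _ size_r.
exists (fun i => if i == N then a else c i).
rewrite big_ord_recr /= eqxx -[q](subrK (a *: t N)) rE; congr (_ + _).
by apply: eq_bigr => i _; rewrite ltn_eqF.
Qed.

Section GoncarovExpansion.
Variables (d : {poly rat} -> {poly rat}) (p : nat -> {poly rat}).
Hypotheses (hd : delta_operator d) (hp : basic_sequence d p).

Lemma iter_delta_lin i a q r : iter i d (a *: q + r) = a *: iter i d q + iter i d r.
Proof. by case: hd => d_lin _ _; elim: i => //= i ->; rewrite d_lin. Qed.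

Lemma iter_delta0 i : iter i d 0 = 0.
Proof.
have := iter_delta_lin i 1 0 0; rewrite !scale1r addr0.
by move/(congr1 (fun r => r - iter i d 0)); rewrite subrr addrK.
Qed.

Lemma iter_deltaD i : {morph iter i d : q r / q + r}.
Proof. by move=> q r; have := iter_delta_lin i 1 q r; rewrite !scale1r. Qed.

Lemma iter_deltaZ i a q : iter i d (a *: q) = a *: iter i d q.
Proof. by rewrite -[a *: q]addr0 iter_delta_lin iter_delta0 addr0. Qed.

Lemma iter_delta_sum i (I : Type) (r : seq I) (F : I -> {poly rat}) :
  iter i d (\sum_(j <- r) F j) = \sum_(j <- r) iter i d (F j).
Proof. exact: (big_morph (iter i d) (iter_deltaD i) (iter_delta0 i)). Qed.

Lemma iter_delta_shift i q (a : rat) :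
  iter i d (q \Po ('X + a%:P)) = iter i d q \Po ('X + a%:P).
Proof. by case: hd => _ d_shift _; elim: i => //= i ->; rewrite d_shift. Qed.

Lemma iter_delta_basic n i : (i <= n)%N -> iter i d (p n) = (n ^_ i)%:R *: p (n - i).
Proof.
case: hp => _ _ _ d_p; elim: i => [|i IH] le_in; first by rewrite ffactn0 subn0 scale1r.
have dZ a q : d (a *: q) = a *: d q := iter_deltaZ 1 a q.
rewrite /= IH ?(ltnW le_in) // -(subnSK le_in) dZ d_p.
by rewrite scalerA -natrM subnSK // -ffactnSr.
Qed.

Lemma goncarov_expand W t : goncarov_basis d W t ->
  forall n (q : {poly rat}), (size q <= n.+1)%N ->
  forall a, q.[a] = \sum_(i < n.+1) (iter i d q).[W i] / (i`!)%:R * (t i).[a].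
Proof.
move=> t_gon n q size_q a.
have [c qE] := deg_basis_span (fun i => (t_gon i).1) size_q.
have coef_c (j : 'I_n.+1) : (iter j d q).[W j] = c j * (j`!)%:R.
  rewrite qE iter_delta_sum horner_sum (bigD1 j) //= big1 ?addr0.
    by rewrite iter_deltaZ hornerZ (t_gon j).2 eqxx muln1.
  move=> i ne_ij; rewrite iter_deltaZ hornerZ (t_gon i).2.
  by rewrite eq_sym -(inj_eq val_inj) /= in ne_ij; rewrite (negbTE ne_ij) muln0 mulr0.
rewrite {1}qE horner_sum; apply: eq_bigr => i _.
by rewrite coef_c mulfK ?hornerZ // pnatr_eq0 -lt0n fact_gt0.
Qed.

Lemma basic_goncarov_binomial W t : goncarov_basis d W t -> forall n (a c : rat),
  (p n).[a + c] = \sum_(i < n.+1) 'C(n, i)%:R * (p (n - i)).[W i + c] * (t i).[a].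
Proof.
move=> t_gon n a c; case: hp => size_p _ _ _.
have size_pc : (size (p n \Po ('X + c%:P)) <= n.+1)%N.
  by rewrite size_comp_poly2 ?size_XaddC // size_p.
have -> : (p n).[a + c] = (p n \Po ('X + c%:P)).[a] by rewrite horner_comp !hornerE.
rewrite (goncarov_expand t_gon size_pc); apply: eq_bigr => i _.
rewrite iter_delta_shift horner_comp !hornerE iter_delta_basic; last by rewrite -ltnS.
rewrite hornerZ -bin_ffact natrM (mulrAC _ i`!%:R) mulfK //.
by rewrite pnatr_eq0 -lt0n fact_gt0.
Qed.

End GoncarovExpansion.

Section OrdCountRecurrence.
Variables (B : binomial_class) (p : nat -> {poly rat}).
Hypotheses (hcard : forall S X : finType, (#|bc_F B S X|)%:R = (p #|S|).[(#|X|)%:R])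
  (hp0 : p 0%N = 1).
Variables (n : nat) (z : nat -> int).
Hypotheses (hz0 : (0 < n)%N -> 1 <= z 0%N)
  (hzmono : forall i, (i.+1 < n)%N -> z i <= z i.+1).

Lemma bounds_nondecreasing j i : (j <= i)%N -> (i < n)%N -> z j <= z i.
Proof.
move=> le_ji lt_in; have lt_jn := leq_ltn_trans le_ji lt_in.
apply: (Order.NatMonotonyTheory.nondecn_inP (D := [pred k | (k < n)%N])) => //=.
  by move=> a b a_n b_n c /andP [_ lt_cb]; exact: ltn_trans lt_cb b_n.
by move=> k _; exact: hzmono.
Qed.

Lemma bounds_ge0 i : (i < n)%N -> 0 <= z i.
Proof.
move=> lt_in; apply: le_trans (bounds_nondecreasing (leq0n i) lt_in).
by apply: le_trans (hz0 _); [|exact: leq_ltn_trans lt_in].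
Qed.

Lemma ord_count_recurrence N y : (N <= n)%N -> ((0 < N)%N -> z N.-1 <= y%:Z) ->
  (p N).[y%:R] = (ord_count B N y z)%:R + \sum_(i < N)
    'C(N, i)%:R * (p (N - i)).[y%:R - (z i)%:~R] * (ord_count B i `|z i| z)%:R.
Proof.
move=> le_Nn le_zy.
have z_mono j i : (j <= i)%N -> (i < #|'I_N|)%N -> z j <= z i.
  by rewrite card_ord => le_ji lt_iN; exact: bounds_nondecreasing (leq_trans lt_iN le_Nn).
have z_ge0 i : (i < #|'I_N|)%N -> 0 <= z i.
  by rewrite card_ord => lt_iN; exact: bounds_ge0 (leq_trans lt_iN le_Nn).
have z_le_y i : (i < #|'I_N|)%N -> z i <= y%:Z.
  rewrite card_ord => lt_iN; have N_gt0 := leq_ltn_trans (leq0n i) lt_iN.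
  apply: le_trans (le_zy N_gt0); apply: z_mono; first by rewrite -ltnS prednK.
  by rewrite card_ord prednK.
have := congr1 (fun m : nat => m%:R : rat) (card_bc_first_failure B z_mono z_ge0 z_le_y).
rewrite hcard !card_ord natrD natr_sum -ord_count_onE => ->; congr (_ + _).
apply: eq_bigr => i _; have lt_iN := ltn_ord i.
have zi : z i = (`|z i|%N)%:Z by rewrite gez0_abs // bounds_ge0 // (leq_trans lt_iN).
rewrite -ord_count_onE !natrM hcard !card_ord natrB; last first.
  by rewrite -lez_nat -zi z_le_y ?card_ord.
by rewrite [in (z i)%:~R]zi pmulrn -mulrA [_ * (ord_count _ _ _ _)%:R]mulrC.
Qed.

Lemma ord_count_eq_coef (a : nat -> rat) :
  (forall N (y : nat), (p N).[y%:R] =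
     \sum_(i < N.+1) 'C(N, i)%:R * (p (N - i)).[y%:R - (z i)%:~R] * a i) ->
  forall N, (N <= n)%N -> forall y : nat, ((0 < N)%N -> z N.-1 <= y%:Z) ->
  (ord_count B N y z)%:R = a N.
Proof.
move=> a_rec; elim/ltn_ind => N IH le_Nn y le_zy.
have := ord_count_recurrence le_Nn le_zy.
rewrite a_rec big_ord_recr /= subnn hp0 hornerC binn mulr1 mul1r addrC.
suff -> : \sum_(i < N) 'C(N, i)%:R * (p (N - i)).[y%:R - (z i)%:~R] * a i =
    \sum_(i < N) 'C(N, i)%:R * (p (N - i)).[y%:R - (z i)%:~R] * (ord_count B i `|z i| z)%:R.
  by move/addIr.
apply: eq_bigr => i _; have lt_in := leq_trans (ltn_ord i) le_Nn.
have zi : z i = (`|z i|%N)%:Z by rewrite gez0_abs // bounds_ge0.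
rewrite IH // ?(ltnW lt_in) // -zi => i_gt0.
by apply: bounds_nondecreasing lt_in; exact: leq_pred.
Qed.

End OrdCountRecurrence.

Theorem mainTheorem18
  (B : binomial_class) (d : {poly rat} -> {poly rat}) (p : nat -> {poly rat})
  (hd : delta_operator d) (hp : basic_sequence d p)
  (hcard : forall S X : finType, (#|bc_F B S X|)%:R = (p #|S|).[(#|X|)%:R])
  (x n : nat) (hx : (0 < x)%N) (z : nat -> int)
  (hz0 : (0 < n)%N -> 1 <= z 0%N)
  (hzmono : forall i, (i.+1 < n)%N -> z i <= z i.+1)
  (hzx : (0 < n)%N -> z n.-1 <= x%:Z)
  (t1 t2 : nat -> {poly rat})
  (ht1 : goncarov_basis d (fun i => x%:R - (z i)%:~R) t1)
  (ht2 : goncarov_basis d (fun i => - (z i)%:~R) t2) :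
  (ord_count B n x z)%:R = (t1 n).[x%:R] /\ (ord_count B n x z)%:R = (t2 n).[0].
Proof.
have hp0 : p 0%N = 1 by case: hp.
split.
- apply: (ord_count_eq_coef hcard hp0 hz0 hzmono (a := fun i => (t1 i).[x%:R])) => // N y.
  rewrite -[y%:R](subrK x%:R) addrC (basic_goncarov_binomial hd hp ht1).
  by apply: eq_bigr => i _; rewrite addrAC.
- apply: (ord_count_eq_coef hcard hp0 hz0 hzmono (a := fun i => (t2 i).[0])) => // N y.
  rewrite -[y%:R]add0r (basic_goncarov_binomial hd hp ht2).
  by apply: eq_bigr => i _; rewrite add0r addrC.
Qed.
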